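(* Let $(X_1,Y_1,Y'_1),\ldots,(X_n,Y_n,Y'_n)$ be a sequence of independent triples of Bernoulli random variables (triples mutually independent; variables within a triple may be dependent) such that $\mathbb{E}[X_i]=p_i$, $\mathbb{E}[Y_i]=q_i$, $\mathbb{E}[Y'_i]=q'_i$ and $\mathbb{E}[X_iY_i]=0$ (i.e., $X_i$ and $Y_i$ are never both $1$). Suppose further that for each $i$ either (a) $q'_i=0$, or (b) $q_i=1-p_i$, and $X_i=\mathbf{1}(\theta_i<p_i)$ and $Y'_i=\mathbf{1}(\theta_i<q'_i)$ for a threshold $\theta_i$ chosen uniformly in $[0,1]$. Let $X=\sum_i X_i$, $Y=\sum_i(Y_i+Y'_i)$, $\mu_x=\mathbb{E}[X]$, $\mu_y=\mathbb{E}[Y]$. If $\mu_x+\mu_y>1$, then $$\frac{\mu_x-1}{\mu_x+\mu_y-1}\le\mathbb{E}\Big[\frac{X}{X+Y}\Big]\le\frac{\mu_x}{\mu_x+\mu_y-1}.$$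
   Context: Convention: in the expression $\frac{X}{X+Y}$, the value $0/0$ is interpreted as $1$ for the left inequality and as $0$ for the right inequality. $\mathbf{1}(\cdot)$ denotes the indicator of an event. *)

From HB Require Import structures.
From mathcomp Require Import all_boot all_order all_algebra.
From mathcomp Require Import all_classical all_reals all_analysis.
Set Implicit Arguments. Unset Strict Implicit. Unset Printing Implicit Defensive.
Import Order.TTheory GRing.Theory Num.Theory.
Local Open Scope classical_set_scope.
Local Open Scope ring_scope.

Definition triple_event d (T : measurableType d) (R : realType) n
  (X Y Z : 'I_n -> T -> R) (i : 'I_n) (A B C : set R) : set T :=
  X i @^-1` A `&` Y i @^-1` B `&` Z i @^-1` C.

(* Mutual independence of the random triples (X_i, Y_i, Z_i), i < n:
   product rule over every subfamily S of indices, for events generated by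
   measurable rectangles (a pi-system generating the sigma-algebra of each
   triple). *)
Definition indep_triples d (T : measurableType d) (R : realType)
  (P : probability T R) n (X Y Z : 'I_n -> T -> R) : Prop :=
  forall (S : {set 'I_n}) (A B C : 'I_n -> set R),
    (forall i, measurable (A i) /\ measurable (B i) /\ measurable (C i)) ->
    P (\bigcap_(i in [set j | j \in S]) triple_event X Y Z i (A i) (B i) (C i))
    = (\prod_(i in S) P (triple_event X Y Z i (A i) (B i) (C i)))%E.

Definition bernoulli_valued (T : Type) (R : realType) (f : T -> R) : Prop :=
  forall t, f t = 0 \/ f t = 1.

(* X/(X+Y) with the convention 0/0 = 1 (left inequality) ... *)
Definition ratio_left (R : realType) (x y : R) : R :=
  if x + y == 0 then 1 else x / (x + y).
(* ... and 0/0 = 0 (right inequality). *)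
Definition ratio_right (R : realType) (x y : R) : R :=
  if x + y == 0 then 0 else x / (x + y).

From HB Require Import structures.
From mathcomp Require Import all_boot all_order all_algebra.
From mathcomp Require Import all_classical all_reals all_analysis.
From mathcomp Require Import ring lra.
Set Implicit Arguments. Unset Strict Implicit. Unset Printing Implicit Defensive.
Import Order.TTheory GRing.Theory Num.Theory.
Local Open Scope ring_scope.

(** By independence, every expectation in the statement is an expectation under
    a product [pi_1 x ... x pi_n] of finite distributions on the states
    [(X_i, Y_i, Y'_i)].  Write [S = X + Y] and [T_i] for [S] with coordinate [i]
    removed.  Then [E[X_i / S]] is a combination of [E[1/(1 + T_i)]] and
    [E[1/(2 + T_i)]], weighted by the probabilities that coordinate [i]
    contributes 1 or 2 to [S].  The key estimate is
    [(E T + a) * E[(1 - a)/(1 + T) + a/(2 + T)] <= 1] for [0 <= a <= 1] and any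
    sum [T] of independent terms, each supported on two consecutive values
    [{c_j, c_j + 1}]: comparing each term with its lower value decouples it from
    the others, which reduces the estimate to a pointwise inequality.
    Hypothesis (a) puts every [T_i]-term on [{0, 1}], hypothesis (b) on [{1, 2}]
    (the threshold coupling makes one of the states (1,0,0), (0,1,1)
    impossible), and this yields [(mu - 1) E[X_i/S] <= p_i] and
    [(mu - 1) E[(Y_i + Y'_i)/S] <= q_i + q'_i].  Summing over [i] gives the right
    inequality, and the left one through [X/(X+Y) = 1 - Y/(X+Y)]. *)

Section MixedHarmonic.
Variable R : realFieldType.

(* [harmonic_mix a t = E[1 / (1 + t + B)]] for [B] Bernoulli of parameter [a]. *)
Definition harmonic_mix (a t : R) := (1 - a) / (1 + t) + a / (2 + t).

Lemma harmonic_mix_le a x y :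
  0 <= a <= 1 -> 0 <= y -> y <= x -> harmonic_mix a x <= harmonic_mix a y.
Proof.
move=> /andP[a0 a1] y0 yx; rewrite /harmonic_mix.
have inv1 : (1 + x)^-1 <= (1 + y)^-1 by rewrite lef_pV2 ?posrE; lra.
have inv2 : (2 + x)^-1 <= (2 + y)^-1 by rewrite lef_pV2 ?posrE; lra.
by rewrite lerD // ler_wpM2l //; lra.
Qed.

Lemma harmonic_mix_shift_le k u a : 0 <= k -> 0 <= u -> 0 <= a <= 1 ->
  (k + a) * harmonic_mix a (k + u) + u * harmonic_mix a (k + u - 1) <= 1.
Proof.
move=> k0 u0 /andP[a0 a1]; rewrite /harmonic_mix.
have [->|u_neq0] := eqVneq u 0.
  rewrite mul0r !addr0.
  have -> : (k + a) * ((1 - a) / (1 + k) + a / (2 + k))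
      = 1 - (1 - a) ^+ 2 / (1 + k) - a * (2 - a) / (2 + k).
    by field; rewrite !gt_eqF //; lra.
  have : 0 <= (1 - a) ^+ 2 / (1 + k) by rewrite divr_ge0 ?exprn_ge0 //; lra.
  have : 0 <= a * (2 - a) / (2 + k) by rewrite divr_ge0 ?mulr_ge0 //; lra.
  lra.
have u_gt0 : 0 < u by rewrite lt0r u_neq0.
have -> : 1 + (k + u - 1) = k + u by ring.
have -> : 2 + (k + u - 1) = 1 + (k + u) by ring.
have -> : (k + a) * ((1 - a) / (1 + (k + u)) + a / (2 + (k + u)))
        + u * ((1 - a) / (k + u) + a / (1 + (k + u)))
    = 1 - a ^+ 2 / ((1 + (k + u)) * (2 + (k + u)))
        - k * (1 - a) / ((k + u) * (1 + (k + u)))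
        - k * a / ((1 + (k + u)) * (2 + (k + u))).
  by field; rewrite !gt_eqF //; lra.
have : 0 <= a ^+ 2 / ((1 + (k + u)) * (2 + (k + u))).
  by rewrite divr_ge0 ?mulr_ge0 ?exprn_ge0 //; lra.
have : 0 <= k * (1 - a) / ((k + u) * (1 + (k + u))).
  by rewrite divr_ge0 ?mulr_ge0 //; lra.
have : 0 <= k * a / ((1 + (k + u)) * (2 + (k + u))).
  by rewrite divr_ge0 ?mulr_ge0 //; lra.
lra.
Qed.

End MixedHarmonic.

Section ProductExpectation.
Variables (R : realFieldType) (n : nat) (S : finType) (pi : 'I_n -> S -> R).
Hypothesis pi_ge0 : forall i s, 0 <= pi i s.
Hypothesis pi_sum1 : forall i, \sum_s pi i s = 1.

Local Notation state := {ffun 'I_n -> S}.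

Definition weight (sg : state) := \prod_i pi i (sg i).
Definition pexp (G : state -> R) := \sum_sg weight sg * G sg.

Lemma weight_ge0 sg : 0 <= weight sg.
Proof. exact: prodr_ge0. Qed.

Lemma weight_neq0 sg j : weight sg != 0 -> pi j (sg j) != 0.
Proof. by apply: contraNneq => pj0; rewrite /weight (bigD1 j) //= pj0 mul0r. Qed.

Lemma pexp_le F G : (forall sg, weight sg != 0 -> F sg <= G sg) -> pexp F <= pexp G.
Proof.
move=> FG; apply: ler_sum => sg _.
have [->|w_neq0] := eqVneq (weight sg) 0; first by rewrite !mul0r.
by rewrite ler_wpM2l ?weight_ge0 ?FG.
Qed.

Lemma pexp_eq F G : (forall sg, weight sg != 0 -> F sg = G sg) -> pexp F = pexp G.
Proof.
move=> FG; apply: eq_bigr => sg _.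
by have [->|/FG->] := eqVneq (weight sg) 0; rewrite ?mul0r.
Qed.

Lemma pexp_ge0 F : (forall sg, weight sg != 0 -> 0 <= F sg) -> 0 <= pexp F.
Proof.
move=> F_ge0; apply: sumr_ge0 => sg _.
by have [->|/F_ge0 ?] := eqVneq (weight sg) 0; rewrite ?mul0r // mulr_ge0 ?weight_ge0.
Qed.

Lemma pexpD F G : pexp (fun sg => F sg + G sg) = pexp F + pexp G.
Proof. by rewrite /pexp -big_split; apply: eq_bigr => sg _; rewrite mulrDr. Qed.

Lemma pexpB F G : pexp (fun sg => F sg - G sg) = pexp F - pexp G.
Proof. by rewrite /pexp -sumrB; apply: eq_bigr => sg _; rewrite mulrBr. Qed.

Lemma pexpZ c F : pexp (fun sg => c * F sg) = c * pexp F.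
Proof. by rewrite /pexp big_distrr; apply: eq_bigr => sg _; rewrite mulrCA. Qed.

Lemma pexp_sum (I : finType) (P : pred I) F :
  pexp (fun sg => \sum_(i | P i) F i sg) = \sum_(i | P i) pexp (F i).
Proof. by rewrite /pexp exchange_big; apply: eq_bigr => sg _; rewrite big_distrr. Qed.

Lemma pexp1 : pexp (fun _ => 1) = 1.
Proof.
rewrite /pexp /weight; under eq_bigr do rewrite mulr1.
rewrite -(bigA_distr_bigA (fun i s => pi i s)).
by rewrite big1 // => i _; rewrite pi_sum1.
Qed.

Lemma pexp_cst c : pexp (fun _ => c) = c.
Proof. by rewrite -[RHS]mulr1 -pexp1 -pexpZ; under [RHS]eq_bigr do rewrite mulr1. Qed.

Definition free_at (j : 'I_n) (g : state -> R) :=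
  forall sg sg' : state, (forall i, i != j -> sg i = sg' i) -> g sg = g sg'.

Definition weight_off (j : 'I_n) (sg : state) := \prod_(i | i != j) pi i (sg i).

Definition swap_at (j : 'I_n) (s s' : S) (sg : state) : state :=
  [ffun i => if i == j then
     (if sg i == s then s' else if sg i == s' then s else sg i) else sg i].

Lemma swap_atK j s s' : involutive (swap_at j s s').
Proof.
move=> sg; apply/ffunP => i; rewrite !ffunE; case: eqP => // ->.
case: (eqVneq (sg j) s) => [->|ns]; first by rewrite eqxx; case: eqVneq.
case: (eqVneq (sg j) s') => [->|ns']; first by rewrite eqxx.
by rewrite (negPf ns) (negPf ns').
Qed.

Lemma swap_at_coord j s s' sg : (swap_at j s s' sg j == s) = (sg j == s').
Proof.
rewrite ffunE eqxx; case: (eqVneq (sg j) s) => [->|ns]; first by rewrite eq_sym.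
case: (eqVneq (sg j) s') => [_|ns']; first by rewrite eqxx.
by rewrite (negPf ns).
Qed.

Lemma pexp_fibers j G : pexp G =
  \sum_s pi j s * \sum_(sg : state | sg j == s) weight_off j sg * G sg.
Proof.
rewrite /pexp (partition_big (fun sg : state => sg j) predT) //=.
apply: eq_bigr => s _; rewrite big_distrr; apply: eq_bigr => sg /eqP <-.
by rewrite /weight (bigD1 j) //= mulrA.
Qed.

Lemma fiber_sum_free j g s s' : free_at j g ->
  \sum_(sg : state | sg j == s) weight_off j sg * g sg =
  \sum_(sg : state | sg j == s') weight_off j sg * g sg.
Proof.
move=> gj; rewrite (reindex_inj (inv_inj (swap_atK j s s'))) /=.
apply: eq_big => sg; first exact: swap_at_coord.
have off i : i != j -> swap_at j s s' sg i = sg i by move=> ij; rewrite ffunE (negPf ij).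
move=> _; congr (_ * _); last exact: gj.
by apply: eq_bigr => i /off ->.
Qed.

Lemma pexp_condition j (F : S -> state -> R) : (forall s, free_at j (F s)) ->
  pexp (fun sg => F (sg j) sg) = \sum_s pi j s * pexp (F s).
Proof.
move=> Fj; rewrite (pexp_fibers j); apply: eq_bigr => s _; congr (_ * _).
rewrite (pexp_fibers j (F s)) (eq_bigr (fun s' => pi j s' *
    \sum_(sg : state | sg j == s) weight_off j sg * F s sg)).
  rewrite -big_distrl /= pi_sum1 mul1r.
  by apply: eq_bigr => sg /eqP ->.
by move=> s' _; rewrite (fiber_sum_free s' s (Fj s)).
Qed.

Lemma pexp_coord j f : pexp (fun sg => f (sg j)) = \sum_s pi j s * f s.
Proof.
rewrite (@pexp_condition j (fun s _ => f s)) //.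
by apply: eq_bigr => s _; rewrite pexp_cst.
Qed.

End ProductExpectation.

Section ShiftedBernoulliSum.
Variables (R : realFieldType) (n : nat) (S : finType) (pi : 'I_n -> S -> R).
Hypothesis pi_ge0 : forall i s, 0 <= pi i s.
Hypothesis pi_sum1 : forall i, \sum_s pi i s = 1.
Variables (tot : S -> R) (c : 'I_n -> R).
Hypothesis tot_ge0 : forall s, 0 <= tot s.
Hypothesis c_ge0 : forall j, 0 <= c j.
Hypothesis tot_supp : forall j s, pi j s != 0 -> tot s = c j \/ tot s = c j + 1.

Local Notation E := (pexp pi).
Local Notation state := {ffun 'I_n -> S}.

Definition partial_sum (J : {set 'I_n}) (sg : state) := \sum_(j in J) tot (sg j).
Definition excess j s := tot s - c j.

Lemma partial_sum_ge0 J sg : 0 <= partial_sum J sg.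
Proof. exact: sumr_ge0. Qed.

Lemma partial_sumD1 (J : {set 'I_n}) j sg : j \in J ->
  partial_sum J sg = tot (sg j) + partial_sum (J :\ j) sg.
Proof.
move=> jJ; rewrite /partial_sum (bigD1 j) //=; congr (_ + _).
by apply: eq_bigl => i; rewrite !inE andbC.
Qed.

Lemma partial_sum_free (J : {set 'I_n}) j (f : R -> R) :
  free_at j (fun sg => f (partial_sum (J :\ j) sg)).
Proof.
move=> sg sg' same; congr f; apply: eq_bigr => i.
by rewrite !inE => /andP[/same ->].
Qed.

Lemma excess_supp j s : pi j s != 0 -> excess j s = 0 \/ excess j s = 1.
Proof. by rewrite /excess => /tot_supp[] ->; [left|right]; ring. Qed.

Lemma pexp_excess_mul_le (J : {set 'I_n}) j a : j \in J -> 0 <= a <= 1 ->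
  E (fun sg => excess j (sg j)) * E (fun sg => harmonic_mix a (partial_sum J sg))
  <= E (fun sg => excess j (sg j) * harmonic_mix a (partial_sum J sg - 1)).
Proof.
move=> jJ a01; set h := harmonic_mix a.
have Eb_ge0 : 0 <= E (fun sg => excess j (sg j)).
  by apply: (pexp_ge0 pi_ge0) => sg /(weight_neq0 j) /excess_supp[] ->; rewrite ?ler01.
(* On the support, [partial_sum (J :\ j) + c j] is [partial_sum J] when
   [excess j = 0] and [partial_sum J - 1] when [excess j = 1]; being free at [j],
   it factors out of the expectation. *)
apply: (@le_trans _ _ (E (fun sg => excess j (sg j)) *
                       E (fun sg => h (partial_sum (J :\ j) sg + c j)))).
  rewrite ler_wpM2l //; apply: (pexp_le pi_ge0) => sg /(weight_neq0 j) sgj.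
  apply: harmonic_mix_le; rewrite ?addr_ge0 ?partial_sum_ge0 //.
  by rewrite (partial_sumD1 _ jJ); move: (tot_supp sgj) => [] ->; lra.
have -> : E (fun sg => excess j (sg j)) * E (fun sg => h (partial_sum (J :\ j) sg + c j))
    = E (fun sg => excess j (sg j) * h (partial_sum (J :\ j) sg + c j)).
  rewrite (pexp_coord pi_sum1) (pexp_condition pi_sum1
    (F := fun s sg => excess j s * h (partial_sum (J :\ j) sg + c j))); last first.
    by move=> s sg sg' same; congr (_ * _); exact: (partial_sum_free J (fun t => h (t + c j))).
  by rewrite big_distrl; apply: eq_bigr => s _; rewrite pexpZ mulrA.
apply: (pexp_le pi_ge0) => sg /(weight_neq0 j) sgj.
rewrite (partial_sumD1 _ jJ) /excess; case: (tot_supp sgj) => ->.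
  by rewrite subrr !mul0r.
by rewrite (_ : c j + 1 + _ - 1 = partial_sum (J :\ j) sg + c j) //; ring.
Qed.

Lemma pexp_harmonic_mix_le J a : 0 <= a <= 1 ->
  (E (partial_sum J) + a) * E (fun sg => harmonic_mix a (partial_sum J sg)) <= 1.
Proof.
move=> a01; set h := harmonic_mix a.
pose k := \sum_(j in J) c j.
have k_ge0 : 0 <= k by exact: sumr_ge0.
have ET : E (partial_sum J) = k + \sum_(j in J) E (fun sg => excess j (sg j)).
  rewrite /partial_sum pexp_sum /k -big_split /=; apply: eq_bigr => j _.
  rewrite -{1}(pexp_cst pi_sum1 (c j)) -pexpD.
  by apply: pexp_eq => sg _; rewrite /excess; ring.
have -> : E (partial_sum J) + a = (k + a) + \sum_(j in J) E (fun sg => excess j (sg j)).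
  by rewrite ET; ring.
rewrite mulrDl big_distrl /=.
apply: (@le_trans _ _ (E (fun sg => (k + a) * h (partial_sum J sg)
                          + (partial_sum J sg - k) * h (partial_sum J sg - 1)))).
  rewrite (pexpD pi (fun sg => (k + a) * h (partial_sum J sg))) pexpZ lerD2l.
  have -> : E (fun sg => (partial_sum J sg - k) * h (partial_sum J sg - 1)) =
      \sum_(j in J) E (fun sg => excess j (sg j) * h (partial_sum J sg - 1)).
    rewrite -pexp_sum; apply: pexp_eq => sg _.
    by rewrite -big_distrl /= /excess /partial_sum /k sumrB.
  by apply: ler_sum => j jJ; exact: pexp_excess_mul_le.
rewrite -[leRHS](pexp_cst pi_sum1 1); apply: (pexp_le pi_ge0) => sg w_neq0.
have k_le : k <= partial_sum J sg.
  apply: ler_sum => j _; have := tot_supp (weight_neq0 j w_neq0); case=> ->; lra.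
have u_ge0 : 0 <= partial_sum J sg - k by rewrite subr_ge0.
have := harmonic_mix_shift_le k_ge0 u_ge0 a01.
by rewrite (_ : k + (partial_sum J sg - k) = partial_sum J sg) //; ring.
Qed.

Definition rest i := partial_sum ([set: 'I_n] :\ i).
Definition full_sum := partial_sum [set: 'I_n].
Definition inv_rest i t := E (fun sg => (t + rest i sg)^-1).

Lemma full_sumE i sg : full_sum sg = tot (sg i) + rest i sg.
Proof. exact: partial_sumD1. Qed.

Lemma pexp_coord_ratio i (v : S -> R) :
  E (fun sg => v (sg i) / full_sum sg) = \sum_s pi i s * v s * inv_rest i (tot s).
Proof.
have -> : \sum_s pi i s * v s * inv_rest i (tot s) =
    \sum_s pi i s * E (fun sg => v s * (tot s + rest i sg)^-1).
  by apply: eq_bigr => s _; rewrite pexpZ mulrA.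
rewrite -(pexp_condition pi_sum1 (F := fun s sg => v s * (tot s + rest i sg)^-1)).
  by apply: pexp_eq => sg _; rewrite (full_sumE i).
by move=> s; exact: (partial_sum_free [set: 'I_n] (fun t => v s * (tot s + t)^-1)).
Qed.

Lemma coord_ratio_bound i A B : 0 <= A -> 0 <= B ->
  (A + B) * (E (fun sg => tot (sg i)) - 1) <= B ->
  (E full_sum - 1) * (A * inv_rest i 1 + B * inv_rest i 2) <= A + B.
Proof.
move=> A_ge0 B_ge0 hyp.
have [AB0|AB_neq0] := eqVneq (A + B) 0.
  have [-> ->] : A = 0 /\ B = 0 by lra.
  by rewrite !mul0r addr0 mulr0.
have AB_gt0 : 0 < A + B by rewrite lt_neqAle eq_sym AB_neq0 addr_ge0.
pose a := B / (A + B).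
have a01 : 0 <= a <= 1.
  by apply/andP; split; rewrite ?divr_ge0 ?addr_ge0 // ler_pdivrMr // mul1r lerDr.
have inv_ge0 t : 0 <= t -> 0 <= inv_rest i t.
  by move=> t0; apply: (pexp_ge0 pi_ge0) => sg _; rewrite invr_ge0 addr_ge0 ?partial_sum_ge0.
set m := E (rest i); set x1 := inv_rest i 1; set x2 := inv_rest i 2.
have := pexp_harmonic_mix_le ([set: 'I_n] :\ i) a01.
rewrite -/(rest i) -/m.
have -> : E (fun sg => harmonic_mix a (rest i sg)) = (1 - a) * x1 + a * x2.
  by rewrite -!pexpZ -pexpD; apply: pexp_eq => sg _; rewrite /harmonic_mix.
move=> mix_le.
have x1_ge0 : 0 <= x1 by apply: inv_ge0.
have x2_ge0 : 0 <= x2 by apply: inv_ge0; lra.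
have hs : (m + a) * (A * x1 + B * x2) <= A + B.
  have -> : A * x1 + B * x2 = (A + B) * ((1 - a) * x1 + a * x2).
    by rewrite /a; field.
  by rewrite mulrCA -[leRHS]mulr1 ler_wpM2l // ltW.
have ETi : E full_sum = E (fun sg => tot (sg i)) + m.
  by rewrite -pexpD; apply: pexp_eq => sg _; rewrite (full_sumE i).
have ea : E (fun sg => tot (sg i)) - 1 <= a by rewrite ler_pdivlMr // mulrC.
apply: le_trans hs; rewrite ler_wpM2r ?addr_ge0 ?mulr_ge0 //.
by rewrite ETi; lra.
Qed.

End ShiftedBernoulliSum.

Section BernoulliTriples.
Variables (R : realFieldType) (n : nat) (pi : 'I_n -> bool * bool * bool -> R).
Hypothesis pi_ge0 : forall i s, 0 <= pi i s.
Hypothesis pi_sum1 : forall i, \sum_s pi i s = 1.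

Local Notation E := (pexp pi).

Definition ones (s : bool * bool * bool) : nat := s.1.1 + s.1.2 + s.2.
Definition tot s : R := (ones s)%:R.
Definition xval (s : bool * bool * bool) : R := (s.1.1 : nat)%:R.
Definition yval (s : bool * bool * bool) : R := (s.1.2 : nat)%:R.
Definition y'val (s : bool * bool * bool) : R := (s.2 : nat)%:R.
Definition mean i (f : bool * bool * bool -> R) := \sum_s pi i s * f s.

Lemma sum_triple (V : nmodType) (F : bool * bool * bool -> V) : \sum_s F s =
  F (true, true, true) + F (true, true, false) + F (true, false, true)
  + F (true, false, false) + F (false, true, true) + F (false, true, false)
  + F (false, false, true) + F (false, false, false).
Proof.
rewrite (eq_bigr (fun s => F (s.1, s.2))); last by case.
rewrite -(pair_bigA _ (fun a b => F (a, b))) /=.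
rewrite (eq_bigr (fun ab => \sum_b F ((ab.1, ab.2), b))); last by case.
by rewrite -(pair_bigA _ (fun a b => \sum_c F ((a, b), c))) /= !big_bool /= !addrA.
Qed.

Hypothesis never_both : forall i b, pi i (true, true, b) = 0.
Hypothesis threshold_cases : forall i, mean i y'val = 0 \/
  (mean i yval = 1 - mean i xval /\
   (pi i (true, false, false) = 0 \/ pi i (false, true, true) = 0)).

Ltac expand_masses i :=
  have := pi_sum1 i; have := threshold_cases i;
  have := pi_ge0 i (false, false, false); have := pi_ge0 i (false, false, true);
  have := pi_ge0 i (false, true, false); have := pi_ge0 i (false, true, true);
  have := pi_ge0 i (true, false, false); have := pi_ge0 i (true, false, true);
  rewrite /mean ?sum_triple /tot /ones /xval /yval /y'val /= ?never_both.

Lemma mass001 i : pi i (false, false, true) = 0.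
Proof. by expand_masses i => ? ? ? ? ? ? [|[]]; lra. Qed.

Lemma mean_tot i : mean i tot = pi i (false, true, false) + pi i (true, false, false)
  + 2 * (pi i (false, true, true) + pi i (true, false, true)).
Proof. by rewrite /mean sum_triple /tot /ones /= !never_both mass001; ring. Qed.

Lemma threshold_dichotomy i :
  (pi i (false, true, true) = 0 /\ pi i (true, false, true) = 0 /\
   pi i (false, true, false) + pi i (true, false, false) <= 1) \/
  (pi i (false, true, false) + pi i (true, false, false)
     + pi i (false, true, true) + pi i (true, false, true) = 1 /\
   (pi i (true, false, false) = 0 \/ pi i (false, true, true) = 0)).
Proof. by expand_masses i => ? ? ? ? ? ? [|[? ?]]; [left|right]; lra. Qed.

(* The lower end [c_i] of the two-point support of [tot] under [pi i]: 0 in case (a),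
   1 in case (b). *)
Definition base i : R := if mean i y'val == 0 then 0 else 1.

Lemma base_ge0 i : 0 <= base i.
Proof. by rewrite /base; case: ifP. Qed.

Lemma tot_ge0 s : 0 <= tot s.
Proof. exact: ler0n. Qed.

Lemma tot_supp i s : pi i s != 0 -> tot s = base i \/ tot s = base i + 1.
Proof.
have y'E : mean i y'val = pi i (false, true, true) + pi i (true, false, true).
  by rewrite /mean sum_triple /y'val /= !never_both mass001; ring.
have := pi_ge0 i (false, true, true); have := pi_ge0 i (true, false, true).
rewrite /base y'E => ? ?.
have [y'0|y'n] := eqVneq (pi i (false, true, true) + pi i (true, false, true)) 0.
  have [z1 z2] : pi i (false, true, true) = 0 /\ pi i (true, false, true) = 0 by lra.
  by case: s => [[[] []] []]; rewrite /tot /ones /= ?never_both ?mass001 ?z1 ?z2 ?eqxx //= => _; lra.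
have m000 : pi i (false, false, false) = 0.
  have := pi_sum1 i; rewrite sum_triple !never_both mass001.
  case: (threshold_dichotomy i) => [[z1 [z2 _]]|[? _]]; last by lra.
  by rewrite z1 z2 addr0 eqxx in y'n.
by case: s => [[[] []] []]; rewrite /tot /ones /= ?never_both ?mass001 ?m000 ?eqxx //= => _; lra.
Qed.

Lemma xval_condition i :
  (pi i (true, false, false) + pi i (true, false, true)) * (mean i tot - 1)
  <= pi i (true, false, true).
Proof.
rewrite mean_tot; have := pi_ge0 i (false, true, false).
have := pi_ge0 i (true, false, false); have := pi_ge0 i (true, false, true).
by case: (threshold_dichotomy i) => [[-> [-> ?]]|[? [?|?]]] ? ? ?; nra.
Qed.

Lemma yval_condition i :
  (pi i (false, true, false) + (pi i (true, false, true) + pi i (false, true, true)))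
    * (mean i tot - 1) <= pi i (true, false, true) + pi i (false, true, true).
Proof.
rewrite mean_tot; have := pi_ge0 i (false, true, false).
have := pi_ge0 i (true, false, false); have := pi_ge0 i (true, false, true).
have := pi_ge0 i (false, true, true).
by case: (threshold_dichotomy i) => [[-> [-> ?]]|[? _]] ? ? ? ?; nra.
Qed.

Lemma mean_tot_le2 i : mean i tot <= 2.
Proof.
rewrite mean_tot; have := pi_ge0 i (false, true, false).
have := pi_ge0 i (true, false, false); have := pi_ge0 i (true, false, true).
have := pi_ge0 i (false, true, true).
by case: (threshold_dichotomy i) => [[-> [-> ?]]|[? _]] ? ? ? ?; lra.
Qed.

Local Notation S := (full_sum tot).
Local Notation coord_bound := (coord_ratio_bound pi_ge0 pi_sum1 tot_ge0 base_ge0 tot_supp).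

Lemma ratio_xval_bound i :
  (E S - 1) * E (fun sg => xval (sg i) / S sg) <= mean i xval.
Proof.
rewrite (pexp_coord_ratio pi_sum1) /mean !sum_triple /xval /= !never_both.
rewrite (_ : tot (true, false, false) = 1) // (_ : tot (true, false, true) = 2) //.
rewrite !mulr0 !mul0r !mulr1 !addr0 !add0r [X in _ <= X]addrC [X in _ * X]addrC.
by apply: coord_bound; rewrite ?pi_ge0 // (pexp_coord pi_sum1) xval_condition.
Qed.

Lemma ratio_yval_bound i :
  (E S - 1) * E (fun sg => (yval (sg i) + y'val (sg i)) / S sg)
  <= mean i yval + mean i y'val.
Proof.
rewrite (pexp_coord_ratio pi_sum1 tot i (fun s => yval s + y'val s)).
rewrite /mean !sum_triple /yval /y'val /= !never_both mass001.
rewrite (_ : tot (false, true, false) = 1) // (_ : tot (true, false, true) = 2) //.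
rewrite (_ : tot (false, true, true) = 2) // ?mulr1n ?mulr0n !mulr0 !mul0r !mulr1 !addr0.
set M := E S - 1; set x1 := inv_rest pi tot i 1; set x2 := inv_rest pi tot i 2.
(* The state (0,1,1) contributes 2 to [Y]: it is bounded once together with the
   other states, and once more through [M * x2 <= 1]. *)
have bound_main : M * (pi i (false, true, false) * x1
               + (pi i (true, false, true) + pi i (false, true, true)) * x2)
          <= pi i (false, true, false) + (pi i (true, false, true) + pi i (false, true, true)).
  by apply: coord_bound; rewrite ?addr_ge0 ?pi_ge0 // (pexp_coord pi_sum1) yval_condition.
have bound_x2 : M * (0 * x1 + 1 * x2) <= 0 + 1.
  apply: coord_bound; rewrite ?ler01 ?lexx // (pexp_coord pi_sum1) add0r mul1r -/(mean i tot).
  by have := mean_tot_le2 i; lra.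
have bound_extra : pi i (false, true, true) * (M * x2) <= pi i (false, true, true).
  by rewrite -[leRHS]mulr1 ler_wpM2l //; move: bound_x2; rewrite mul0r mul1r !add0r.
lra.
Qed.

Definition xsum (sg : {ffun 'I_n -> bool * bool * bool}) := \sum_i xval (sg i).
Definition ysum (sg : {ffun 'I_n -> bool * bool * bool}) :=
  \sum_i (yval (sg i) + y'val (sg i)).

Lemma full_sum_split sg : S sg = xsum sg + ysum sg.
Proof.
rewrite /full_sum /partial_sum /xsum /ysum -big_split /=.
apply: eq_big => [i|i _]; first by rewrite inE.
by rewrite /tot /ones /xval /yval /y'val !natrD addrA.
Qed.

Lemma pexp_xsum : E xsum = \sum_i mean i xval.
Proof. by rewrite pexp_sum; apply: eq_bigr => i _; rewrite (pexp_coord pi_sum1). Qed.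

Lemma pexp_ysum : E ysum = \sum_i (mean i yval + mean i y'val).
Proof.
rewrite pexp_sum; apply: eq_bigr => i _.
rewrite (pexp_coord pi_sum1 _ (fun s => yval s + y'val s)) /mean -big_split /=.
by apply: eq_bigr => s _; rewrite mulrDr.
Qed.

Theorem pexp_ratio_bounds : 1 < E xsum + E ysum ->
  E (fun sg => xsum sg / (xsum sg + ysum sg)) <= E xsum / (E xsum + E ysum - 1) /\
  E (fun sg => ysum sg / (xsum sg + ysum sg)) <= E ysum / (E xsum + E ysum - 1).
Proof.
have ES : E S = E xsum + E ysum.
  by rewrite -pexpD; apply: pexp_eq => sg _; rewrite full_sum_split.
rewrite -ES => mu_gt1; split; rewrite ler_pdivlMr ?subr_gt0 // mulrC.
  have -> : E (fun sg => xsum sg / (xsum sg + ysum sg)) =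
      \sum_i E (fun sg => xval (sg i) / S sg).
    by rewrite -pexp_sum; apply: pexp_eq => sg _; rewrite -full_sum_split mulr_suml.
  rewrite mulr_sumr pexp_xsum; apply: ler_sum => i _; exact: ratio_xval_bound.
have -> : E (fun sg => ysum sg / (xsum sg + ysum sg)) =
    \sum_i E (fun sg => (yval (sg i) + y'val (sg i)) / S sg).
  by rewrite -pexp_sum; apply: pexp_eq => sg _; rewrite -full_sum_split mulr_suml.
rewrite mulr_sumr pexp_ysum; apply: ler_sum => i _; exact: ratio_yval_bound.
Qed.

End BernoulliTriples.

Arguments tot {R} s.
Arguments xval {R} s.
Arguments yval {R} s.
Arguments y'val {R} s.
Arguments xsum {R n} sg.
Arguments ysum {R n} sg.

Local Open Scope classical_set_scope.

Section FiniteValuedExpectation.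
Context d (T : measurableType d) (R : realType) (P : probability T R).

Lemma expectation_fin_valued (I : finType) (f : T -> I) (G : I -> R) :
  (forall i, measurable (f @^-1` [set i])) ->
  ('E_P[fun t => G (f t)] = (\sum_i G i * fine (P (f @^-1` [set i])))%:E)%E.
Proof.
move=> mf; rewrite unlock.
have -> : (fun t => (G (f t))%:E) =
    (fun t => \sum_i ((G i)%:E * (\1_(f @^-1` [set i]) t)%:E))%E.
  apply/funext => t; rewrite (bigD1 (f t)) //= big1.
    by rewrite indicE mem_set //= mule1 adde0.
  move=> i ni; rewrite indicE memNset ?mule0 //= => fti.
  by move/eqP: ni; apply; rewrite fti.
rewrite integral_sum //; last first.
  by move=> i; apply: integrableZl => //; exact: integrable_indic.
rewrite -sumEFin; apply: eq_bigr => i _.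
rewrite integralZl //; last exact: integrable_indic.
by rewrite integral_indic // setIT EFinM fineK // fin_num_measure.
Qed.

End FiniteValuedExpectation.

Lemma bernoulli_bitE (R : realType) (x : R) : x = 0 \/ x = 1 -> ((x == 1) : nat)%:R = x.
Proof. by case=> ->; rewrite ?eqxx // eq_sym oner_eq0. Qed.

Lemma bernoulli_preim1 (R : realType) (x : R) (b : bool) :
  x = 0 \/ x = 1 -> (x = (b : nat)%:R) <-> (x == 1) = b.
Proof.
by move/bernoulli_bitE => <-; case: b; case: (x == 1); split => // /eqP;
  rewrite ?oner_eq0 // eq_sym oner_eq0.
Qed.

Lemma ratio_rightE (R : realType) (x y : R) : ratio_right x y = x / (x + y).
Proof. by rewrite /ratio_right; case: eqP => // ->; rewrite invr0 mulr0. Qed.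

Lemma ratio_leftE (R : realType) (x y : R) : ratio_left x y = 1 - y / (x + y).
Proof.
rewrite /ratio_left; case: eqP => [->|xy0]; first by rewrite invr0 mulr0 subr0.
by field; apply/eqP.
Qed.

Section BernoulliTriplesOnProbabilitySpace.
Context d (T : measurableType d) (R : realType) (P : probability T R) (n : nat)
  (X Y Y' : 'I_n -> {RV P >-> R}).
Hypothesis bernoulli_XYY' : forall i, bernoulli_valued (X i) /\ bernoulli_valued (Y i)
  /\ bernoulli_valued (Y' i).
Hypothesis indep_XYY' : indep_triples P (fun i => X i : T -> R) (fun i => Y i : T -> R)
  (fun i => Y' i : T -> R).

Definition state_at i t : bool * bool * bool := (X i t == 1, Y i t == 1, Y' i t == 1).
Definition state t : {ffun 'I_n -> bool * bool * bool} := [ffun i => state_at i t].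
Definition law i s := fine (P (state_at i @^-1` [set s])).

Let bit_set (b : bool) : set R := [set (b : nat)%:R].

Lemma state_at_preim1 i s : state_at i @^-1` [set s] =
  triple_event (fun i => X i : T -> R) (fun i => Y i : T -> R) (fun i => Y' i : T -> R)
    i (bit_set s.1.1) (bit_set s.1.2) (bit_set s.2).
Proof.
have [bX [bY bY']] := bernoulli_XYY' i.
case: s => [[a b] c]; apply/seteqP; split => t /=.
  case=> Ea Eb Ec; rewrite /triple_event /preimage /=.
  by split; [split|]; apply/bernoulli_preim1.
rewrite /triple_event /preimage /= => -[[Ea Eb] Ec].
move/(bernoulli_preim1 _ (bX t)): Ea => <-; move/(bernoulli_preim1 _ (bY t)): Eb => <-.
by move/(bernoulli_preim1 _ (bY' t)): Ec => <-.
Qed.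

Lemma measurable_state_at_preim1 i s : measurable (state_at i @^-1` [set s]).
Proof.
rewrite state_at_preim1 /triple_event.
by apply: measurableI; first apply: measurableI;
  apply: measurable_funPTI; exact: measurable_set1.
Qed.

Lemma law_ge0 i s : 0 <= law i s.
Proof. by rewrite /law fine_ge0 // measure_ge0. Qed.

Lemma expectation_state_at i (G : bool * bool * bool -> R) :
  ('E_P[fun t => G (state_at i t)] = (mean law i G)%:E)%E.
Proof.
rewrite expectation_fin_valued; last exact: measurable_state_at_preim1.
by congr (_%:E); apply: eq_bigr => s _; rewrite mulrC.
Qed.

Lemma law_sum1 i : \sum_s law i s = 1.
Proof.
apply: EFin_inj; rewrite -[RHS](expectation_cst P 1).
rewrite (expectation_state_at i (fun _ => 1)) /mean.
by congr (_%:E); apply: eq_bigr => s _; rewrite mulr1.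
Qed.

Lemma state_preim1 sg : state @^-1` [set sg] =
  \bigcap_(i in [set j | j \in [set: 'I_n]%SET]) state_at i @^-1` [set sg i].
Proof.
apply/seteqP; split => t /=; first by move=> <- i _; rewrite /state ffunE.
by move=> H; apply/ffunP => i; rewrite /state ffunE; apply: H; rewrite /= inE.
Qed.

Lemma weight_law sg : weight law sg = fine (P (state @^-1` [set sg])).
Proof.
rewrite state_preim1.
under eq_bigcapr do rewrite state_at_preim1.
rewrite indep_XYY'; last by move=> i; split; [|split]; exact: measurable_set1.
rewrite (eq_bigr (fun i => (law i (sg i))%:E)); last first.
  move=> i _; rewrite /law state_at_preim1 fineK // fin_num_measure //.
  by rewrite -state_at_preim1; exact: measurable_state_at_preim1.
by rewrite prodEFin /= /weight; apply: eq_bigl => i; rewrite inE.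
Qed.

Lemma expectation_state (G : {ffun 'I_n -> bool * bool * bool} -> R) :
  ('E_P[fun t => G (state t)] = (pexp law G)%:E)%E.
Proof.
rewrite expectation_fin_valued; last first.
  move=> sg; rewrite state_preim1; apply: fin_bigcap_measurable => [|i _].
    exact: finite_finset.
  exact: measurable_state_at_preim1.
by congr (_%:E); apply: eq_bigr => sg _; rewrite weight_law mulrC.
Qed.

Lemma X_state i t : X i t = xval (state_at i t).
Proof. by rewrite /xval bernoulli_bitE //; case: (bernoulli_XYY' i) => + _; apply. Qed.

Lemma Y_state i t : Y i t = yval (state_at i t).
Proof. by rewrite /yval bernoulli_bitE //; case: (bernoulli_XYY' i) => _ [+ _]; apply. Qed.

Lemma Y'_state i t : Y' i t = y'val (state_at i t).
Proof. by rewrite /y'val bernoulli_bitE //; case: (bernoulli_XYY' i) => _ [_ +]; apply. Qed.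

Lemma mean_law_xval i : mean law i xval = fine 'E_P[X i].
Proof.
rewrite (_ : (X i : T -> R) = fun t => xval (state_at i t)); last exact/funext/X_state.
by rewrite expectation_state_at.
Qed.

Lemma mean_law_yval i : mean law i yval = fine 'E_P[Y i].
Proof.
rewrite (_ : (Y i : T -> R) = fun t => yval (state_at i t)); last exact/funext/Y_state.
by rewrite expectation_state_at.
Qed.

Lemma mean_law_y'val i : mean law i y'val = fine 'E_P[Y' i].
Proof.
rewrite (_ : (Y' i : T -> R) = fun t => y'val (state_at i t)); last exact/funext/Y'_state.
by rewrite expectation_state_at.
Qed.

Lemma law_never_both : (forall i, 'E_P[X i \* Y i] = 0)%E ->
  forall i b, law i (true, true, b) = 0.
Proof.
move=> XY0 i; have := XY0 i.
rewrite (_ : (X i \* Y i)%R = fun t => xval (state_at i t) * yval (state_at i t)); last first.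
  by apply/funext => t; rewrite /= X_state Y_state.
rewrite (expectation_state_at i (fun s => xval s * yval s)) => /(congr1 fine) /=.
rewrite /mean sum_triple /xval /yval /=.
have := law_ge0 i (true, true, true); have := law_ge0 i (true, true, false).
by move=> ? ? ? []; lra.
Qed.

Lemma law_eq0 i s : (forall t, state_at i t != s) -> law i s = 0.
Proof.
move=> ne; rewrite /law (_ : _ @^-1` _ = set0) ?measure0 //.
by apply/seteqP; split => t //= st; have := ne t; rewrite st eqxx.
Qed.

Lemma law_threshold :
  (forall i, fine 'E_P[Y' i] = 0 \/
     (fine 'E_P[Y i] = 1 - fine 'E_P[X i] /\
      exists theta : {RV P >-> R},
        (forall A : set R, measurable A ->
           P (theta @^-1` A) = uniform_prob (@ltr01 R) A) /\
        (forall t, X i t = if theta t < fine 'E_P[X i] then 1 else 0) /\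
        (forall t, Y' i t = if theta t < fine 'E_P[Y' i] then 1 else 0))) ->
  forall i, mean law i y'val = 0 \/
    (mean law i yval = 1 - mean law i xval /\
     (law i (true, false, false) = 0 \/ law i (false, true, true) = 0)).
Proof.
move=> threshold i; rewrite mean_law_xval mean_law_yval mean_law_y'val.
case: (threshold i) => [|[qp [theta [_ [Xth Y'th]]]]]; [by left | right; split=> //].
have [pq'|q'p] := lerP (fine 'E_P[X i]) (fine 'E_P[Y' i]); [left|right];
  apply: law_eq0 => t; apply/negP => /eqP[]; rewrite Xth Y'th.
  case: (boolP (theta t < fine 'E_P[X i])) => th; last by rewrite eq_sym oner_eq0.
  by rewrite (lt_le_trans th pq') eqxx.
case: (boolP (theta t < fine 'E_P[Y' i])) => th'; last by move=> _ _ /=; rewrite eq_sym oner_eq0.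
by rewrite (lt_trans th' q'p) eqxx.
Qed.

Lemma Xsum_state t : \sum_i X i t = xsum (state t).
Proof. by apply: eq_bigr => i _; rewrite /state ffunE X_state. Qed.

Lemma Ysum_state t : \sum_i (Y i t + Y' i t) = ysum (state t).
Proof. by apply: eq_bigr => i _; rewrite /state ffunE Y_state Y'_state. Qed.

Lemma mean_Xsum : fine 'E_P[fun t => \sum_i X i t] = pexp law xsum.
Proof.
rewrite (_ : (fun t => _) = fun t => xsum (state t)); last exact/funext/Xsum_state.
by rewrite expectation_state.
Qed.

Lemma mean_Ysum : fine 'E_P[fun t => \sum_i (Y i t + Y' i t)] = pexp law ysum.
Proof.
rewrite (_ : (fun t => _) = fun t => ysum (state t)); last exact/funext/Ysum_state.
by rewrite expectation_state.
Qed.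

Lemma expectation_ratio_right :
  ('E_P[fun t => ratio_right (\sum_i X i t) (\sum_i (Y i t + Y' i t))]
   = (pexp law (fun sg => xsum sg / (xsum sg + ysum sg)))%:E)%E.
Proof.
rewrite -expectation_state; congr ('E_P[_])%E; apply/funext => t.
by rewrite ratio_rightE Xsum_state Ysum_state.
Qed.

Lemma expectation_ratio_left :
  ('E_P[fun t => ratio_left (\sum_i X i t) (\sum_i (Y i t + Y' i t))]
   = (1 - pexp law (fun sg => ysum sg / (xsum sg + ysum sg)))%:E)%E.
Proof.
rewrite -(pexp_cst (@law_sum1) 1) -pexpB -expectation_state.
congr ('E_P[_])%E; apply/funext => t.
by rewrite ratio_leftE Xsum_state Ysum_state.
Qed.

End BernoulliTriplesOnProbabilitySpace.

Theorem theorem4 (d : measure_display) (T : measurableType d) (R : realType)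
  (P : probability T R) (n : nat) (X Y Y' : 'I_n -> {RV P >-> R}) :
  (forall i, bernoulli_valued (X i) /\ bernoulli_valued (Y i)
             /\ bernoulli_valued (Y' i)) ->
  indep_triples P (fun i => X i : T -> R) (fun i => Y i : T -> R)
                  (fun i => Y' i : T -> R) ->
  let p := fun i => fine ('E_P[X i])%E in
  let q := fun i => fine ('E_P[Y i])%E in
  let q' := fun i => fine ('E_P[Y' i])%E in
  (forall i, ('E_P[X i \* Y i] = 0)%E) ->
  (forall i, q' i = 0 \/
     (q i = 1 - p i /\
      exists theta : {RV P >-> R},
        (forall A : set R, measurable A ->
           P (theta @^-1` A) = uniform_prob (@ltr01 R) A) /\
        (forall t, X i t = if theta t < p i then 1 else 0) /\
        (forall t, Y' i t = if theta t < q' i then 1 else 0))) ->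
  let Xs := fun t => \sum_(i < n) X i t in
  let Ys := fun t => \sum_(i < n) (Y i t + Y' i t) in
  let mux := fine ('E_P[Xs])%E in
  let muy := fine ('E_P[Ys])%E in
  mux + muy > 1 ->
  (((mux - 1) / (mux + muy - 1))%:E
     <= 'E_P[fun t => ratio_left (Xs t) (Ys t)])%E /\
  ('E_P[fun t => ratio_right (Xs t) (Ys t)]
     <= (mux / (mux + muy - 1))%:E)%E.
Proof.
move=> bXYY' indep p q q' XY0 threshold Xs Ys mux muy mu_gt1.
have muxE : mux = pexp (law X Y Y') xsum := mean_Xsum bXYY' indep.
have muyE : muy = pexp (law X Y Y') ysum := mean_Ysum bXYY' indep.
have mu_gt1' : 1 < pexp (law X Y Y') xsum + pexp (law X Y Y') ysum by rewrite -muxE -muyE.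
have [ratio_x ratio_y] := pexp_ratio_bounds (@law_ge0 _ _ _ _ _ X Y Y') (law_sum1 bXYY')
  (law_never_both bXYY' XY0)
  (law_threshold bXYY' threshold) mu_gt1'.
rewrite -muxE -muyE in ratio_x ratio_y.
rewrite (expectation_ratio_left bXYY' indep) (expectation_ratio_right bXYY' indep) !lee_fin.
split=> //.
have -> : (mux - 1) / (mux + muy - 1) = 1 - muy / (mux + muy - 1).
  by field; rewrite gt_eqF // subr_gt0.
by rewrite lerD2l lerN2.
Qed.
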